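(* Let $m\geq 3$ be odd, $n=3m$, and let $\mathcal{L}_n$ be the latin square defined below. Every transversal of $\mathcal{L}_n$ contains at least one entry of the block $A_{22}$.
   Context: A latin square of order $n$ is viewed as its set of entries $(r,c,s)$ (symbol $s$ in row $r$, column $c$); a transversal is a set of $n$ entries containing each row, column and symbol exactly once. Let $m\ge3$ be odd and $n=3m$. The latin square $\mathcal{L}_n$ has rows, columns and symbols in $\{0,1,\dots,n-1\}$ and is partitioned into nine $m\times m$ blocks $A_{ij}$, $i,j\in\{1,2,3\}$: for $a,b\in\{0,\dots,m-1\}$, the cell in row $(i-1)m+a$ and column $(j-1)m+b$ contains $A_{ij}[a,b]$. Writing $t$ for the residue of $a+b$ modulo $m$ in $\{0,\dots,m-1\}$, $A_{ij}[a,b]=t$ if $t\neq 0$ and $i+j\equiv 2\pmod 3$; $A_{ij}[a,b]=t+m$ if $t\neq m-1$ and $i+j\equiv 0\pmod 3$; $A_{ij}[a,b]=t+2m$ if $t\neq m-1$ and $i+j\equiv1\pmod3$; $A_{ij}[a,b]=0$ if $t=0$ and $(i,j)=(1,1)$; $A_{ij}[a,b]=2m-1$ if $t=0$ and $(i,j)=(2,3)$; $A_{ij}[a,b]=3m-1$ if $t=0$ and $(i,j)=(3,2)$; $A_{ij}[a,b]=0$ if $t=m-1$ and $(i,j)\in\{(2,2),(3,3)\}$; $A_{ij}[a,b]=2m-1$ if $t=m-1$ and $(i,j)\in\{(1,2),(3,1)\}$; $A_{ij}[a,b]=3m-1$ if $t=m-1$ and $(i,j)\in\{(1,3),(2,1)\}$.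 An entry of $\mathcal{L}_n$ is said to be in block $A_{ij}$ if its cell lies in that block. *)

From mathcomp Require Import all_boot.
Set Implicit Arguments. Unset Strict Implicit. Unset Printing Implicit Defensive.

(* Block entry A_ij[a,b] for block indices i j in {1,2,3}, with m the block size. *)
Definition blockA (m i j a b : nat) : nat :=
  let t := (a + b) %% m in
  let s := (i + j) %% 3 in
  if (t != 0) && (s == 2) then t
  else if (t != m.-1) && (s == 0) then t + m
  else if (t != m.-1) && (s == 1) then t + 2 * m
  else if (t == 0) && (i == 1) && (j == 1) then 0
  else if (t == 0) && (i == 2) && (j == 3) then 2 * m - 1
  else if (t == 0) && (i == 3) && (j == 2) then 3 * m - 1
  else if (t == m.-1) && (((i == 2) && (j == 2)) || ((i == 3) && (j == 3))) then 0
  else if (t == m.-1) && (((i == 1) && (j == 2)) || ((i == 3) && (j == 1))) then 2 * m - 1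
  else if (t == m.-1) && (((i == 1) && (j == 3)) || ((i == 2) && (j == 1))) then 3 * m - 1
  else 0.

(* Symbol of L_n (n = 3m) in row r, column c: row r = (i-1)m + a, column c = (j-1)m + b. *)
Definition Lsym (m r c : nat) : nat :=
  blockA m (r %/ m).+1 (c %/ m).+1 (r %% m) (c %% m).

Definition Lentries (m : nat) : {set 'I_(3 * m) * 'I_(3 * m) * 'I_(3 * m)} :=
  [set e : 'I_(3 * m) * 'I_(3 * m) * 'I_(3 * m) | nat_of_ord e.2 == Lsym m e.1.1 e.1.2].

Definition is_latin_transversal (m : nat) (T : {set 'I_(3 * m) * 'I_(3 * m) * 'I_(3 * m)}) : Prop :=
  [/\ T \subset Lentries m, #|T| = 3 * m,
      forall r : 'I_(3 * m), #|[set e in T | e.1.1 == r]| = 1,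
      forall c : 'I_(3 * m), #|[set e in T | e.1.2 == c]| = 1 &
      forall s : 'I_(3 * m), #|[set e in T | e.2 == s]| = 1].

Definition in_A22 (m : nat) (e : 'I_(3 * m) * 'I_(3 * m) * 'I_(3 * m)) : bool :=
  (e.1.1 %/ m == 1) && (e.1.2 %/ m == 1).

From mathcomp Require Import all_boot zify.
Set Implicit Arguments.
Unset Strict Implicit.
Unset Printing Implicit Defensive.

(* Outside A_22, L_n is the banded square whose symbol in block (i, j) at offset
   t = (r + c) mod m is t + m ((i + j) mod 3), except on five classes of defect
   cells: offset 0 in A_23 and A_32, offset m - 1 in A_21, A_31 and A_33.
   Let T be a transversal avoiding A_22. Over T, symbol - row - column sums to
   0 modulo m because m is odd, while each defect in A_23 or A_32 contributes -1
   and each defect in A_33 contributes +1; so T uses as many A_33 defects as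
   A_23 and A_32 defects together. Counting the symbols of T below m and below
   2m against the row and column counts of the blocks then gives
   3 |T ∩ A_11| <= 1 and |T ∩ A_33| = 2 |T ∩ A_11|, so T misses A_11 and A_33,
   the only blocks where symbol 0 occurs. *)

Lemma sum_ltn_ord n k : \sum_(x < n) (x < k : nat) = minn k n.
Proof. by elim: n => [|n IHn]; rewrite ?big_ord0 ?big_ord_recr /= ?IHn; lia. Qed.

Lemma sum_eqn_ord n k : \sum_(x < n) ((x : nat) == k : nat) = (k < n).
Proof. by elim: n => [|n IHn]; rewrite ?big_ord0 ?big_ord_recr /= ?IHn; lia. Qed.

Lemma sum_divn_eq_ord k m i : 0 < m -> i < k -> \sum_(x < k * m) (x %/ m == i : nat) = m.
Proof.
move=> m_gt0 lt_ik; have lt_divn j x : (x %/ m < j) = (x < j * m) by rewrite ltn_divLR.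
rewrite (eq_bigr (fun x : 'I_(k * m) => (x < i.+1 * m) - (x < i * m))) => [|x _]; last first.
  by rewrite -!lt_divn; lia.
rewrite sumnB => [|x _]; last by rewrite -!lt_divn; lia.
rewrite !sum_ltn_ord !(minn_idPl _) ?leq_mul2r ?lt_ik ?(ltnW lt_ik) ?orbT //.
by rewrite mulSn addnK.
Qed.

Lemma sum_id_ord n : \sum_(x < n) x = 'C(n, 2).
Proof. by rewrite -(big_mkord xpredT (fun x => x)) bin2_sum. Qed.

Lemma sum_proj_fibres1 (I J : finType) (A : {set I}) (p : I -> J) (F : J -> nat) :
  (forall y, #|[set x in A | p x == y]| = 1) -> \sum_(x in A) F (p x) = \sum_y F y.
Proof.
move=> fibres1; rewrite (partition_big p xpredT) //=; apply: eq_bigr => y _.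
rewrite (eq_bigr (fun _ => F y)) => [|x /andP[_ /eqP->]] //.
by rewrite sum_nat_const -cardsE fibres1 mul1n.
Qed.

Lemma eq_sum_modn (I : finType) (A : {pred I}) (F G : I -> nat) d :
  (forall i, i \in A -> F i = G i %[mod d]) ->
  \sum_(i in A) F i = \sum_(i in A) G i %[mod d].
Proof. by move=> eqFG; rewrite -modn_summ (eq_bigr _ eqFG) modn_summ. Qed.

Lemma eq_modn_mulD d x y p q : x + d * p = y + d * q -> x = y %[mod d].
Proof.
by move=> e; rewrite -(modnMDl p x) -(modnMDl q y) !(mulnC _ d) !(addnC (d * _)) e.
Qed.

Section Cells.
Variable m : nat.
Hypothesis m_ge3 : 3 <= m.

(* Blocks are numbered from 0, so the paper's A_ij is [in_block (i-1) (j-1)];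
   [offset] is the paper's t, and [at_cell i j k] selects the cells of a block
   with t = k. *)
Definition offset (r c : nat) : nat := (r + c) %% m.
Definition band (r c : nat) : nat := (r %/ m + c %/ m) %% 3.
Definition in_block (i j r c : nat) : bool := (r %/ m == i) && (c %/ m == j).
Definition at_cell (i j k r c : nat) : bool := in_block i j r c && (offset r c == k).

Lemma at_cell_in_block i j k r c : at_cell i j k r c <= in_block i j r c.
Proof. by rewrite /at_cell; case: (in_block i j r c); case: (offset r c == k). Qed.

Lemma in_block_row i r c : c < 3 * m ->
  (r %/ m == i : nat) = in_block i 0 r c + in_block i 1 r c + in_block i 2 r c.
Proof.
rewrite -ltn_divLR ?(leq_trans _ m_ge3) // /in_block.
by case: (c %/ m) => [|[|[|]]] //= _; rewrite ?andbT ?andbF ?addn0.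
Qed.

Lemma in_block_col j r c : r < 3 * m ->
  (c %/ m == j : nat) = in_block 0 j r c + in_block 1 j r c + in_block 2 j r c.
Proof.
rewrite -ltn_divLR ?(leq_trans _ m_ge3) // /in_block.
by case: (r %/ m) => [|[|[|]]] //= _; rewrite ?addn0.
Qed.

Lemma cell_coords r c : r < 3 * m -> c < 3 * m ->
  [/\ r %/ m < 3, c %/ m < 3, r %% m < m, c %% m < m &
      [/\ (r + c) %% m < m, (r %% m + c %% m) %/ m < 2 &
      r %% m + c %% m = (r + c) %% m + m * ((r %% m + c %% m) %/ m)]].
Proof.
have m_gt0 : 0 < m by lia.
move=> hr hc; have ha := ltn_pmod r m_gt0; have hb := ltn_pmod c m_gt0.
have carry : r %% m + c %% m = (r + c) %% m + m * ((r %% m + c %% m) %/ m).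
  by rewrite -modnDm mulnC [RHS]addnC -divn_eq.
by rewrite !ltn_divLR ?ltn_pmod //; split=> //; split=> //; lia.
Qed.

Section Cell.
Variables r c : nat.
Hypotheses (hr : r < 3 * m) (hc : c < 3 * m) (not_A22 : ~~ in_block 1 1 r c).

Local Ltac eval_mod3 :=
  repeat match goal with |- context [(?x + ?y) %% 3] =>
    let v := eval compute in ((x + y) %% 3) in change ((x + y) %% 3) with v end.

(* Splits into the eight blocks and the offsets 0, m - 1 and the others; every
   case is then linear arithmetic. *)
Local Ltac cell_cases :=
  move: not_A22 (cell_coords hr hc) (divn_eq r m) (divn_eq c m);
  rewrite /at_cell /in_block /offset /band;
  move: (r %% m) (c %% m) ((r + c) %% m) ((r %% m + c %% m) %/ m) => ? ? ? ?;
  move: (r %/ m) (c %/ m) => [|[|[|?]]] [|[|[|?]]] //=; eval_mod3;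
  move=> _ [? ? ? ? [? ? ?]] ? ?; repeat case: ifP; move=> *; lia.

Lemma Lsym_defects :
  Lsym m r c =
    if at_cell 2 2 m.-1 r c then 0
    else if at_cell 1 2 0 r c || at_cell 2 0 m.-1 r c then 2 * m - 1
    else if at_cell 2 1 0 r c || at_cell 1 0 m.-1 r c then 3 * m - 1
    else offset r c + m * band r c.
Proof. rewrite /Lsym /blockA modnDm; cell_cases. Qed.

Local Notation s := (Lsym m r c).

Lemma band0_balance :
  (s < m) + at_cell 1 2 0 r c + at_cell 2 1 0 r c =
  in_block 0 0 r c + in_block 1 2 r c + in_block 2 1 r c + at_cell 2 2 m.-1 r c.
Proof. rewrite Lsym_defects; cell_cases. Qed.

Lemma bands01_balance :
  (s < 2 * m) + at_cell 2 1 0 r c + at_cell 1 0 m.-1 r c =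
  in_block 0 0 r c + in_block 0 1 r c + in_block 1 0 r c + in_block 1 2 r c +
  in_block 2 1 r c + in_block 2 2 r c + at_cell 2 0 m.-1 r c.
Proof. rewrite Lsym_defects; cell_cases. Qed.

Lemma Lsym_eq0 : (s == 0 : nat) = at_cell 0 0 0 r c + at_cell 2 2 m.-1 r c.
Proof. rewrite Lsym_defects; cell_cases. Qed.

Lemma Lsym_eq_2m1 : at_cell 1 2 0 r c <= (s == 2 * m - 1).
Proof. rewrite Lsym_defects; cell_cases. Qed.

Lemma Lsym_eq_3m1 : at_cell 2 1 0 r c + at_cell 1 0 m.-1 r c <= (s == 3 * m - 1).
Proof. rewrite Lsym_defects; cell_cases. Qed.

Lemma Lsym_congr :
  s + at_cell 1 2 0 r c + at_cell 2 1 0 r c = r + c + at_cell 2 2 m.-1 r c %[mod m].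
Proof.
(* The multiples of m on both sides are read off the table of [Lsym_defects]. *)
apply: (@eq_modn_mulD _ _ _
  (r %/ m + c %/ m + (r %% m + c %% m) %/ m + 2 * at_cell 2 2 m.-1 r c + at_cell 2 0 m.-1 r c)
  (band r c + 2 * at_cell 1 2 0 r c + 3 * at_cell 2 1 0 r c + at_cell 1 0 m.-1 r c)).
rewrite Lsym_defects; cell_cases.
Qed.

End Cell.
End Cells.

Section Transversal.
Variables (m : nat) (T : {set 'I_(3 * m) * 'I_(3 * m) * 'I_(3 * m)}).
Hypotheses (m_ge3 : 3 <= m) (m_odd : odd m) (T_transversal : is_latin_transversal T)
  (T_avoids_A22 : forall e, e \in T -> ~~ in_A22 e).

Let m_gt0 : 0 < m := ltnW (ltnW m_ge3).

Local Notation X i j := (\sum_(e in T) (in_block m i j e.1.1 e.1.2 : nat)).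
Local Notation D i j k := (\sum_(e in T) (at_cell m i j k e.1.1 e.1.2 : nat)).

Lemma entry_cell e : e \in T ->
  [/\ e.1.1 < 3 * m, e.1.2 < 3 * m, ~~ in_block m 1 1 e.1.1 e.1.2 &
      nat_of_ord e.2 = Lsym m e.1.1 e.1.2].
Proof.
move=> eT; split; [exact: ltn_ord | exact: ltn_ord | exact: T_avoids_A22 |].
by case: T_transversal => /subsetP/(_ e eT); rewrite inE => /eqP.
Qed.

Lemma sum_rows (F : nat -> nat) : \sum_(e in T) F e.1.1 = \sum_(x < 3 * m) F x.
Proof.
by case: T_transversal => _ _ rows _ _; exact: (sum_proj_fibres1 (fun x : 'I_(3 * m) => F x) rows).
Qed.

Lemma sum_cols (F : nat -> nat) : \sum_(e in T) F e.1.2 = \sum_(x < 3 * m) F x.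
Proof.
by case: T_transversal => _ _ _ cols _; exact: (sum_proj_fibres1 (fun x : 'I_(3 * m) => F x) cols).
Qed.

Lemma sum_symbols (F : nat -> nat) : \sum_(e in T) F e.2 = \sum_(x < 3 * m) F x.
Proof.
by case: T_transversal => _ _ _ _ syms; exact: (sum_proj_fibres1 (fun x : 'I_(3 * m) => F x) syms).
Qed.

Lemma symbol_count_lt k : k <= 3 * m -> \sum_(e in T) (e.2 < k : nat) = k.
Proof.
by move=> le_k; rewrite (sum_symbols (fun x => (x < k : nat))) sum_ltn_ord; apply/minn_idPl.
Qed.

Lemma symbol_count_eq k : k < 3 * m -> \sum_(e in T) ((e.2 : nat) == k : nat) = 1.
Proof. by move=> lt_k; rewrite (sum_symbols (fun x => (x == k : nat))) sum_eqn_ord lt_k. Qed.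

Lemma block_row_count i : i < 3 -> X i 0 + X i 1 + X i 2 = m.
Proof.
move=> lt_i3; apply: etrans (sum_divn_eq_ord (k := 3) m_gt0 lt_i3).
rewrite -(sum_rows (fun x => (x %/ m == i : nat))) -!big_split.
by apply: eq_bigr => e /entry_cell[_ hc _ _]; rewrite (in_block_row m_ge3 i _ hc).
Qed.

Lemma block_col_count j : j < 3 -> X 0 j + X 1 j + X 2 j = m.
Proof.
move=> lt_j3; apply: etrans (sum_divn_eq_ord (k := 3) m_gt0 lt_j3).
rewrite -(sum_cols (fun x => (x %/ m == j : nat))) -!big_split.
by apply: eq_bigr => e /entry_cell[hr _ _ _]; rewrite (in_block_col m_ge3 j _ hr).
Qed.

Lemma A22_count : X 1 1 = 0.
Proof. by apply: big1 => e /T_avoids_A22 /negbTE A22F; exact: (congr1 nat_of_bool A22F). Qed.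

Lemma at_cell_count_le i j k : D i j k <= X i j.
Proof. by apply: leq_sum => e _; apply: at_cell_in_block. Qed.

Lemma band0_count : m + D 1 2 0 + D 2 1 0 = X 0 0 + X 1 2 + X 2 1 + D 2 2 m.-1.
Proof.
rewrite -[k in k + _ + _ = _](@symbol_count_lt m) ?leq_pmull // -!big_split.
by apply: eq_bigr => e /entry_cell[hr hc hA ->]; apply: band0_balance.
Qed.

Lemma bands01_count :
  2 * m + D 2 1 0 + D 1 0 m.-1 =
  X 0 0 + X 0 1 + X 1 0 + X 1 2 + X 2 1 + X 2 2 + D 2 0 m.-1.
Proof.
rewrite -[k in k + _ + _ = _](@symbol_count_lt (2 * m)) ?leq_mul2r ?orbT // -!big_split.
by apply: eq_bigr => e /entry_cell[hr hc hA ->]; apply: bands01_balance.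
Qed.

Lemma zero_count : D 0 0 0 + D 2 2 m.-1 = 1.
Proof.
rewrite -[RHS](@symbol_count_eq 0) ?muln_gt0 // -big_split.
by apply: eq_bigr => e /entry_cell[hr hc hA ->]; rewrite Lsym_eq0.
Qed.

Lemma top_symbol_counts : D 1 2 0 <= 1 /\ D 2 1 0 + D 1 0 m.-1 <= 1.
Proof.
split.
  rewrite -[leqRHS](@symbol_count_eq (2 * m - 1)); last lia.
  by apply: leq_sum => e /entry_cell[hr hc hA ->]; apply: Lsym_eq_2m1.
rewrite -big_split -[leqRHS](@symbol_count_eq (3 * m - 1)); last lia.
by apply: leq_sum => e /entry_cell[hr hc hA ->]; apply: Lsym_eq_3m1.
Qed.

Lemma defect_balance : D 2 2 m.-1 = D 1 2 0 + D 2 1 0.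
Proof.
have congr : \sum_(e in T) e.2 + D 1 2 0 + D 2 1 0
    = \sum_(e in T) e.1.1 + \sum_(e in T) e.1.2 + D 2 2 m.-1 %[mod m].
  rewrite -!big_split; apply: eq_sum_modn => e /entry_cell[hr hc hA ->].
  exact: Lsym_congr.
have S_mod_m : 'C(3 * m, 2) %% m = 0.
  have odd_3m : odd (3 * m) by rewrite oddM m_odd.
  by apply/eqP; rewrite -/(m %| _) bin2odd //; apply/dvdn_mulr/dvdn_mull.
move: congr; rewrite (sum_symbols id) (sum_rows id) (sum_cols id) sum_id_ord.
move/eqP; rewrite -!addnA eqn_modDl -[('C(_, _) + _) %% m]modnDml S_mod_m add0n.
have [top23 top32] := top_symbol_counts; have zero := zero_count.
by rewrite !modn_small => [/eqP||]; lia.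
Qed.

Lemma no_transversal_avoiding_A22 : False.
Proof.
have := @block_row_count 0 isT; have := @block_row_count 1 isT; have := @block_row_count 2 isT.
have := @block_col_count 0 isT; have := @block_col_count 1 isT; have := @block_col_count 2 isT.
have [top23 top32] := top_symbol_counts.
have := A22_count; have := band0_count; have := bands01_count; have := zero_count.
have := defect_balance; have := at_cell_count_le 0 0 0; have := at_cell_count_le 2 2 m.-1.
lia.
Qed.

End Transversal.

Theorem lemma13 (m : nat) (hm : 3 <= m) (hodd : odd m)
  (T : {set 'I_(3 * m) * 'I_(3 * m) * 'I_(3 * m)}) :
  is_latin_transversal T -> exists2 e, e \in T & in_A22 e.
Proof.
move=> T_transversal; apply/exists_inP; apply: contraT.
rewrite negb_exists_in => /forall_inP T_avoids_A22.
by case: (no_transversal_avoiding_A22 hm hodd T_transversal T_avoids_A22).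
Qed.
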